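(* Let $G=(V,E)$ be a graph on $n$ vertices and define $f:\mathbb{C}^{2n}\to\mathbb{C}^E$ by $$\left(p^{(1)}_v,p^{(2)}_v\right)_{v\in V}\longmapsto\left((p^{(1)}_v-p^{(1)}_u)(p^{(2)}_v-p^{(2)}_u)\right)_{uv\in E}.$$ Then the Zariski closure $\overline{f(\mathbb{C}^{2n})}$ (and consequently $f(\mathbb{C}^{2n})$) is not contained in any linear hyperplane of $\mathbb{C}^E$. *)

From mathcomp Require Import all_boot all_order all_algebra complex.
From mathcomp Require Import reals.
Set Implicit Arguments. Unset Strict Implicit. Unset Printing Implicit Defensive.
Import GRing.Theory Num.Theory.
Local Open Scope ring_scope.

(* A simple graph on the vertex set 'I_n is a symmetric irreflexive relation adj.
   Its edge set E: each edge uv is represented once, as the pair (u,v) with u < v. *)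
Definition edges (n : nat) (adj : rel 'I_n) : {set 'I_n * 'I_n} :=
  [set uv : 'I_n * 'I_n | ((uv.1 < uv.2)%N && adj uv.1 uv.2)].

(* The map f : C^{2n} -> C^E, p = (p1_v, p2_v)_v  |->  ((p1_v - p1_u)(p2_v - p2_u))_{uv in E}.
   A point of C^E is a function on pairs, only read on E. *)
Definition fmap (R : realType) (n : nat) (p1 p2 : 'I_n -> R[i]) (uv : 'I_n * 'I_n) : R[i] :=
  (p1 uv.2 - p1 uv.1) * (p2 uv.2 - p2 uv.1).

Definition in_hyperplane (R : realType) (n : nat) (E : {set 'I_n * 'I_n})
  (c : 'I_n * 'I_n -> R[i]) (x : 'I_n * 'I_n -> R[i]) : Prop :=
  \sum_(e in E) c e * x e = 0.

Definition in_some_lin_hyperplane (R : realType) (n : nat) (E : {set 'I_n * 'I_n})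
  (S : ('I_n * 'I_n -> R[i]) -> Prop) : Prop :=
  exists c : 'I_n * 'I_n -> R[i], (exists2 e, e \in E & c e != 0) /\
    forall x, S x -> in_hyperplane E c x.

From mathcomp Require Import all_boot all_order all_algebra complex.
From mathcomp Require Import reals.
Import GRing.Theory Num.Theory.
Local Open Scope ring_scope.

(* For an edge ab, putting p1 = delta a and p2 = delta b gives f(p) = -1 at ab
   and 0 at every other edge, so the image of f contains (minus) every
   coordinate vector of C^E; a linear form vanishing on it is therefore zero. *)

Definition delta (R : realType) {n : nat} (a k : 'I_n) : R[i] :=
  (k == a)%:R.

Lemma fmap_delta (R : realType) (n : nat) (a b : 'I_n) (uv : 'I_n * 'I_n) :
  a != b ->
  fmap (delta R a) (delta R b) uv = - ((uv == (a, b)) || (uv == (b, a)))%:R.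
Proof.
case: uv => u v neq_ab; rewrite /fmap /delta /= !xpair_eqE.
have neq_ba : (b == a) = false by rewrite eq_sym (negbTE neq_ab).
have [-> | neq_ua] := eqVneq u a; have [-> | neq_va] := eqVneq v a;
  rewrite ?eqxx ?(negbTE neq_ab) ?neq_ba ?subrr ?mul0r ?oppr0 //=.
all: by case: eqP => _;
  rewrite /= ?andbF ?addr0 ?subr0 ?sub0r ?mulr0 ?mul1r ?mulN1r ?oppr0.
Qed.

Lemma edges_asym {n : nat} {adj : rel 'I_n} {u v : 'I_n} :
  (u, v) \in edges adj -> (v, u) \notin edges adj.
Proof.
by rewrite !inE /= => /andP[lt_uv _]; apply/negP => /andP[/(ltn_trans lt_uv)];
  rewrite ltnn.
Qed.

Lemma edges_neq {n : nat} {adj : rel 'I_n} {u v : 'I_n} :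
  (u, v) \in edges adj -> u != v.
Proof. by rewrite inE -val_eqE => /andP[/ltn_eqF ->]. Qed.

Lemma in_hyperplane_fmap_delta {R : realType} {n : nat} {adj : rel 'I_n}
    {c : 'I_n * 'I_n -> R[i]} {a b : 'I_n} :
  (a, b) \in edges adj ->
  in_hyperplane (edges adj) c (fmap (delta R a) (delta R b)) -> c (a, b) = 0.
Proof.
move=> ab_E; have neq_ab := edges_neq ab_E.
rewrite /in_hyperplane (bigD1 (a, b)) //= big1 => [|e /andP[e_E ne_ab]].
  by rewrite fmap_delta // eqxx mulrN1 addr0 => /eqP; rewrite oppr_eq0 => /eqP.
rewrite fmap_delta // (negbTE ne_ab) /=.
have [ba_e | _] := eqVneq e (b, a); last by rewrite oppr0 mulr0.
by move: e_E; rewrite ba_e (negbTE (edges_asym ab_E)).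
Qed.

Theorem lemma3p8 (R : realType) (n : nat) (adj : rel 'I_n)
  (adj_sym : symmetric adj) (adj_irr : irreflexive adj) :
  ~ in_some_lin_hyperplane (edges adj)
      (fun x => exists p1 p2 : 'I_n -> R[i], x = fmap p1 p2).
Proof.
(* [edges] keeps each edge once, as the pair u < v. *)
case=> c [[[a b] ab_E /eqP c_ab_neq0] c_vanishes]; apply: c_ab_neq0.
apply: (in_hyperplane_fmap_delta ab_E); apply: c_vanishes.
by exists (delta R a), (delta R b).
Qed.
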